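(* Let $H$ be a hyperring, $i:A\to B$ a strict injective morphism of $H$-modules (identify $A$ with $i(A)$, a submodule of $B$), and $C$ a submodule of $A$. Let $j:A\to A/C$ and $j':B\to B/C$ be the quotient maps. Then the induced map $i':A/C\to B/C$, $[x]\mapsto[i(x)]$, is a well-defined strict injective morphism, and the square with top $i$, left $j$, right $j'$, bottom $i'$ is both a pullback and a pushout in $\mathrm{Mod}_H$.
   Context: A hyperaddition on a set $M$ is a commutative map $M\times M\to\{$nonempty subsets of $M\}$; for subsets $X+Y=\bigcup_{x\in X,y\in Y}(x+y)$, and elements are identified with singletons. A hypergroup: $(a+b)+c=a+(b+c)$; unique $0$ with $a+0=\{a\}$; unique $-a$ with $0\in a+(-a)$; $a\in b+c\Rightarrow c\in a+(-b)$. A hyperring is a hypergroup with commutative monoid multiplication distributing over hyperaddition. An $H$-module is a hypergroup $M$ with $H\times M\to M$ such that $1m=m$, $0m=0$, $(xy)m=x(ym)$, $x(m_1+m_2)=xm_1+xm_2$, $(x+y)m=xm+ym$. A morphism satisfies $f(0)=0$, $f(rm)=rf(m)$, $f(a+b)\subseteq f(a)+f(b)$; it is strict if equality holds. A submodule of $M$ is a subset $N$ containing $0$, closed under negatives and scalar multiplication, with $a+b\subseteq N$ for all $a,b\in N$. For a submodule $C$ of $B$, $B/C$ is the set of classes of $b_1\equiv b_2\iff b_1+C=b_2+C$, with hyperaddition $[x]+[y]=\{[z]: z\in x'+y', x'\equiv x, y'\equiv y\}$ and action $r[x]=[rx]$. *)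

From Stdlib Require Import ClassicalEpsilon.

Set Implicit Arguments.
Unset Strict Implicit.

(* A hyperaddition on T is encoded as a ternary relation: [add a b c] means
   c \in a + b.  Sums of subsets X + Y = \bigcup_{x in X, y in Y} (x + y). *)

Definition is_hypergroup (T : Type) (add : T -> T -> T -> Prop) (zero : T) : Prop :=
  (forall a b, exists c, add a b c) /\
  (forall a b c, add a b c -> add b a c) /\
  (* associativity: (a+b)+c = a+(b+c) as sets *)
  (forall a b c d, (exists x, add a b x /\ add x c d) <-> (exists y, add b c y /\ add a y d)) /\
  (forall a c, add a zero c <-> c = a) /\
  (forall z, (forall a c, add a z c <-> c = a) -> z = zero) /\
  (forall a, exists! b, add a b zero) /\
  (forall a b c nb, add b c a -> add b nb zero -> add a nb c).

Record hyperring := HyperRing {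
  hr_car :> Type;
  hr_add : hr_car -> hr_car -> hr_car -> Prop;
  hr_zero : hr_car;
  hr_mul : hr_car -> hr_car -> hr_car;
  hr_one : hr_car;
  hr_hgroup : is_hypergroup hr_add hr_zero;
  hr_mulA : forall x y z, hr_mul x (hr_mul y z) = hr_mul (hr_mul x y) z;
  hr_mulC : forall x y, hr_mul x y = hr_mul y x;
  hr_mul1 : forall x, hr_mul hr_one x = x;
  hr_distr : forall x y z w,
      hr_add (hr_mul x y) (hr_mul x z) w <-> exists t, hr_add y z t /\ w = hr_mul x t
}.

Record hmod_ops (H : hyperring) (M : Type) := HModOps {
  m_add : M -> M -> M -> Prop;
  m_zero : M;
  m_act : H -> M -> M
}.

Definition is_hmodule (H : hyperring) (M : Type) (o : hmod_ops H M) : Prop :=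
  is_hypergroup (m_add o) (m_zero o) /\
  (forall m, m_act o (hr_one H) m = m) /\
  (forall m, m_act o (hr_zero H) m = m_zero o) /\
  (forall x y m, m_act o (hr_mul x y) m = m_act o x (m_act o y m)) /\
  (forall x m1 m2 w, m_add o (m_act o x m1) (m_act o x m2) w <->
                     exists t, m_add o m1 m2 t /\ w = m_act o x t) /\
  (forall x y m w, m_add o (m_act o x m) (m_act o y m) w <->
                   exists t, hr_add x y t /\ w = m_act o t m).

Definition is_morph (H : hyperring) (M N : Type) (oM : hmod_ops H M) (oN : hmod_ops H N)
  (f : M -> N) : Prop :=
  f (m_zero oM) = m_zero oN /\
  (forall r m, f (m_act oM r m) = m_act oN r (f m)) /\
  (forall a b c, m_add oM a b c -> m_add oN (f a) (f b) (f c)).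

Definition is_strict_morph (H : hyperring) (M N : Type) (oM : hmod_ops H M) (oN : hmod_ops H N)
  (f : M -> N) : Prop :=
  is_morph oM oN f /\
  (forall a b d, m_add oN (f a) (f b) d <-> exists c, m_add oM a b c /\ d = f c).

Definition injective (X Y : Type) (f : X -> Y) : Prop := forall x y, f x = f y -> x = y.

Definition is_submodule (H : hyperring) (M : Type) (o : hmod_ops H M) (N : M -> Prop) : Prop :=
  N (m_zero o) /\
  (forall a b, N a -> m_add o a b (m_zero o) -> N b) /\
  (forall r a, N a -> N (m_act o r a)) /\
  (forall a b c, N a -> N b -> m_add o a b c -> N c).

Section Quotient.
Variables (H : hyperring) (M : Type) (o : hmod_ops H M) (C : M -> Prop).

Definition coset (b : M) : M -> Prop := fun z => exists c, C c /\ m_add o b c z.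
Definition qequiv (b1 b2 : M) : Prop := forall z, coset b1 z <-> coset b2 z.
Definition qcls (b : M) : M -> Prop := fun x => qequiv x b.
Definition quot : Type := { P : M -> Prop | exists b, P = qcls b }.
Definition qproj (b : M) : quot := exist _ (qcls b) (ex_intro _ b eq_refl).
Definition qrepr (X : quot) : M :=
  proj1_sig (constructive_indefinite_description _ (proj2_sig X)).

Definition quot_ops : hmod_ops H quot :=
  HModOps
    (fun X Y Z => exists x y z, proj1_sig X x /\ proj1_sig Y y /\ m_add o x y z /\ Z = qproj z)
    (qproj (m_zero o))
    (fun r X => qproj (m_act o r (qrepr X))).
End Quotient.

Definition image_pred (X Y : Type) (f : X -> Y) (P : X -> Prop) : Y -> Prop :=
  fun y => exists x, P x /\ y = f x.

Definition is_pullback (H : hyperring) (A B P Q : Type)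
  (oA : hmod_ops H A) (oB : hmod_ops H B) (oP : hmod_ops H P) (oQ : hmod_ops H Q)
  (i : A -> B) (j : A -> P) (j' : B -> Q) (i' : P -> Q) : Prop :=
  (forall a, j' (i a) = i' (j a)) /\
  forall (D : Type) (oD : hmod_ops H D), is_hmodule oD ->
  forall (g : D -> B) (h : D -> P), is_morph oD oB g -> is_morph oD oP h ->
  (forall d, j' (g d) = i' (h d)) ->
  exists u : D -> A,
    (is_morph oD oA u /\ (forall d, i (u d) = g d) /\ (forall d, j (u d) = h d)) /\
    (forall u' : D -> A,
        is_morph oD oA u' -> (forall d, i (u' d) = g d) -> (forall d, j (u' d) = h d) ->
        forall d, u' d = u d).

Definition is_pushout (H : hyperring) (A B P Q : Type)
  (oA : hmod_ops H A) (oB : hmod_ops H B) (oP : hmod_ops H P) (oQ : hmod_ops H Q)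
  (i : A -> B) (j : A -> P) (j' : B -> Q) (i' : P -> Q) : Prop :=
  (forall a, j' (i a) = i' (j a)) /\
  forall (D : Type) (oD : hmod_ops H D), is_hmodule oD ->
  forall (g : B -> D) (h : P -> D), is_morph oB oD g -> is_morph oP oD h ->
  (forall a, g (i a) = h (j a)) ->
  exists u : Q -> D,
    (is_morph oQ oD u /\ (forall b, u (j' b) = g b) /\ (forall p, u (i' p) = h p)) /\
    (forall u' : Q -> D,
        is_morph oQ oD u' -> (forall b, u' (j' b) = g b) -> (forall p, u' (i' p) = h p) ->
        forall q, u' q = u q).

(* Everything reduces to one observation: for a strict injective [i], the
   relation "b is in b' + c for some c in C" is reflected and preserved by
   [i], and any element of B congruent mod i(C) to some i(x) already lies in
   i(A).  Hence [i'] is well defined, injective and strict; a cone over the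
   cospan factors through A because its B-component lands in i(A); and a
   cocone factors through B/C because its B-component vanishes on i(C). *)
From Stdlib Require Import ClassicalEpsilon FunctionalExtensionality
  PropExtensionality ProofIrrelevance.

Set Implicit Arguments.
Unset Strict Implicit.

Section Hypergroup.
Variables (T : Type) (add : T -> T -> T -> Prop) (zero : T).
Hypothesis hG : is_hypergroup add zero.

Lemma hg_addC a b c : add a b c -> add b a c.
Proof. destruct hG as [_ [h _]]; apply h. Qed.

Lemma hg_addA a b c x d : add a b x -> add x c d -> exists y, add b c y /\ add a y d.
Proof. destruct hG as [_ [_ [h _]]]; intros; apply h; eauto. Qed.

Lemma hg_add0 a c : add a zero c <-> c = a.
Proof. destruct hG as [_ [_ [_ [h _]]]]; apply h. Qed.

Lemma hg_0add a : add zero a a.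
Proof. apply hg_addC, hg_add0; reflexivity. Qed.

Lemma hg_opp a : exists b, add a b zero.
Proof. destruct hG as [_ [_ [_ [_ [_ [h _]]]]]]; destruct (h a) as [b [hb _]]; eauto. Qed.

Lemma hg_opp_unique a b b' : add a b zero -> add a b' zero -> b = b'.
Proof.
destruct hG as [_ [_ [_ [_ [_ [h _]]]]]]; intros hb hb'.
destruct (h a) as [n [_ hn]]; rewrite <- (hn b hb); apply hn, hb'.
Qed.

Lemma hg_rev a b c nb : add b c a -> add b nb zero -> add a nb c.
Proof. destruct hG as [_ [_ [_ [_ [_ [_ h]]]]]]; apply h. Qed.

End Hypergroup.

Section ModuleAxioms.
Variables (H : hyperring) (M N : Type) (o : hmod_ops H M) (oN : hmod_ops H N).

Lemma hmod_act_add (hM : is_hmodule o) r m1 m2 t :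
  m_add o m1 m2 t -> m_add o (m_act o r m1) (m_act o r m2) (m_act o r t).
Proof. destruct hM as [_ [_ [_ [_ [h _]]]]]; intro; apply h; eauto. Qed.

Variable (P : M -> Prop).
Hypothesis hP : is_submodule o P.

Lemma sub0 : P (m_zero o).
Proof. apply hP. Qed.
Lemma subN a b : P a -> m_add o a b (m_zero o) -> P b.
Proof. apply hP. Qed.
Lemma subZ r a : P a -> P (m_act o r a).
Proof. apply hP. Qed.
Lemma subD a b c : P a -> P b -> m_add o a b c -> P c.
Proof. apply hP. Qed.

Variable (f : M -> N).

Lemma morph0 : is_morph o oN f -> f (m_zero o) = m_zero oN.
Proof. intros [h _]; exact h. Qed.
Lemma morphZ r m : is_morph o oN f -> f (m_act o r m) = m_act oN r (f m).
Proof. intros [_ [h _]]; apply h. Qed.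
Lemma morphD a b c : is_morph o oN f -> m_add o a b c -> m_add oN (f a) (f b) (f c).
Proof. intros [_ [_ h]]; apply h. Qed.

Lemma strict_morphD a b d :
  is_strict_morph o oN f -> m_add oN (f a) (f b) d -> exists c, m_add o a b c /\ d = f c.
Proof. intros [_ h]; apply h. Qed.

End ModuleAxioms.

Section Quotient.
Variables (H : hyperring) (M : Type) (o : hmod_ops H M) (C : M -> Prop).

Notation qeq := (qequiv o C).
Notation qp := (qproj o C).

Lemma quot_ext (X Y : quot o C) : proj1_sig X = proj1_sig Y -> X = Y.
Proof.
destruct X as [P p], Y as [Q q]; simpl; intro E; subst; f_equal; apply proof_irrelevance.
Qed.

Lemma qequiv_refl x : qeq x x.
Proof. intro; tauto. Qed.
Lemma qequiv_sym x y : qeq x y -> qeq y x.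
Proof. intros E z; specialize (E z); tauto. Qed.
Lemma qequiv_trans x y z : qeq x y -> qeq y z -> qeq x z.
Proof. intros E F w; specialize (E w); specialize (F w); tauto. Qed.

Lemma qproj_eq x y : qp x = qp y <-> qeq x y.
Proof.
split; intro E.
- assert (hx : proj1_sig (qp x) x) by apply qequiv_refl.
  rewrite E in hx; exact hx.
- apply quot_ext, functional_extensionality; intro z; apply propositional_extensionality.
  unfold qcls; split; intro h; [exact (qequiv_trans h E) | exact (qequiv_trans h (qequiv_sym E))].
Qed.

Lemma qproj_qrepr X : qp (qrepr X) = X.
Proof.
apply quot_ext; unfold qrepr.
destruct (constructive_indefinite_description _ _) as [b hb]; symmetry; exact hb.
Qed.

Lemma qrepr_qproj b : qeq (qrepr (qp b)) b.
Proof. apply qproj_eq, qproj_qrepr. Qed.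

Lemma qproj_surj (X : quot o C) : exists b, X = qp b.
Proof. exists (qrepr X); symmetry; apply qproj_qrepr. Qed.

Lemma quot_fun_ext (D : Type) (u u' : quot o C -> D) :
  (forall b, u (qp b) = u' (qp b)) -> forall X, u X = u' X.
Proof. intros E X; destruct (qproj_surj X) as [b ->]; apply E. Qed.

Lemma quot_addE x y Z :
  m_add (quot_ops o C) (qp x) (qp y) Z <->
  exists x' y' z, qeq x' x /\ qeq y' y /\ m_add o x' y' z /\ Z = qp z.
Proof. reflexivity. Qed.

Hypotheses (hM : is_hmodule o) (hC : is_submodule o C).
Let hG := proj1 hM.

Lemma coset_shift b b' c0 z : C c0 -> m_add o b' c0 b -> coset o C b z -> coset o C b' z.
Proof.
intros Cc0 hb [c [Cc hz]].
destruct (hg_addA hG hb hz) as [y [hy hy']].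
exists y; split; [exact (subD hC Cc0 Cc hy) | exact hy'].
Qed.

Lemma qequivP b b' : qeq b b' <-> exists c, C c /\ m_add o b' c b.
Proof.
split.
- intro E; apply E; exists (m_zero o); split; [apply (sub0 hC) | apply (hg_add0 hG); reflexivity].
- intros [c [Cc hb]] z; split; [apply (coset_shift Cc hb) |].
  (* the coset of b' is recovered from that of b by adding -c *)
  destruct (hg_opp hG c) as [nc hnc].
  apply (coset_shift (subN hC Cc hnc) (hg_rev hG (hg_addC hG hb) hnc)).
Qed.

Lemma qequiv_act r b b' : qeq b b' -> qeq (m_act o r b) (m_act o r b').
Proof.
rewrite !qequivP; intros [c [Cc hb]].
exists (m_act o r c); split; [apply (subZ hC r Cc) | apply (hmod_act_add hM r hb)].
Qed.

Lemma quot_act_qproj r b : m_act (quot_ops o C) r (qp b) = qp (m_act o r b).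
Proof. apply qproj_eq, qequiv_act, qrepr_qproj. Qed.

Lemma qproj_sub0 c : C c -> qp c = qp (m_zero o).
Proof. intro Cc; apply qproj_eq, qequivP; exists c; split; [exact Cc | apply (hg_0add hG)]. Qed.

Section Lift.
Variables (D : Type) (oD : hmod_ops H D) (g : M -> D).
Hypotheses (hD : is_hypergroup (m_add oD) (m_zero oD)) (hg : is_morph o oD g)
  (hgC : forall c, C c -> g c = m_zero oD).

Lemma morph_qequiv b b' : qeq b b' -> g b = g b'.
Proof.
rewrite qequivP; intros [c [Cc hb]].
apply (morphD hg) in hb; rewrite (hgC Cc) in hb; exact (proj1 (hg_add0 hD _ _) hb).
Qed.

Definition quot_lift (X : quot o C) : D := g (qrepr X).

Lemma quot_lift_qproj b : quot_lift (qp b) = g b.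
Proof. apply morph_qequiv, qrepr_qproj. Qed.

Lemma quot_lift_morph : is_morph (quot_ops o C) oD quot_lift.
Proof.
split; [| split].
- simpl; rewrite quot_lift_qproj; apply (morph0 hg).
- intros r X; destruct (qproj_surj X) as [b ->].
  rewrite quot_act_qproj, !quot_lift_qproj; apply (morphZ r b hg).
- intros X Y Z; destruct (qproj_surj X) as [x ->]; destruct (qproj_surj Y) as [y ->].
  rewrite quot_addE; intros [x' [y' [z [Ex [Ey [hz ->]]]]]].
  rewrite !quot_lift_qproj, <- (morph_qequiv Ex), <- (morph_qequiv Ey).
  apply (morphD hg hz).
Qed.

End Lift.
End Quotient.

Section StrictMorph.
Variables (H : hyperring) (A B : Type) (oA : hmod_ops H A) (oB : hmod_ops H B).
Hypotheses (hA : is_hmodule oA) (hB : is_hmodule oB).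
Variable (i : A -> B).
Hypothesis hi : is_strict_morph oA oB i.
Let hm := proj1 hi.

Lemma image_submodule (C : A -> Prop) : is_submodule oA C -> is_submodule oB (image_pred i C).
Proof.
intro hC; split; [| split; [| split]].
- exists (m_zero oA); split; [apply (sub0 hC) | symmetry; apply (morph0 hm)].
- intros a b [c [Cc ->]] hb.
  destruct (hg_opp (proj1 hA) c) as [nc hnc].
  assert (hinc : m_add oB (i c) (i nc) (m_zero oB)).
  { rewrite <- (morph0 hm); apply (morphD hm hnc). }
  exists nc; split; [exact (subN hC Cc hnc) | exact (hg_opp_unique (proj1 hB) hb hinc)].
- intros r a [c [Cc ->]]; exists (m_act oA r c).
  split; [apply (subZ hC r Cc) | symmetry; apply (morphZ r c hm)].
- intros a b d [c1 [C1 ->]] [c2 [C2 ->]] hd.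
  destruct (strict_morphD hi hd) as [c3 [h3 ->]].
  exists c3; split; [exact (subD hC C1 C2 h3) | reflexivity].
Qed.

Lemma qequiv_image_range (C : A -> Prop) (hC : is_submodule oA C) b x :
  qequiv oB (image_pred i C) b (i x) -> exists a, b = i a.
Proof.
rewrite (qequivP hB (image_submodule hC)); intros [cb [[c [_ ->]] hb]].
destruct (strict_morphD hi hb) as [a [_ ->]]; eauto.
Qed.

Hypothesis hinj : injective i.

Lemma qequiv_image (C : A -> Prop) (hC : is_submodule oA C) x y :
  qequiv oB (image_pred i C) (i x) (i y) <-> qequiv oA C x y.
Proof.
rewrite (qequivP hB (image_submodule hC)), (qequivP hA hC); split.
- intros [cb [[c [Cc ->]] hb]]; destruct (strict_morphD hi hb) as [a [ha E]].
  apply hinj in E; subst; eauto.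
- intros [c [Cc hc]]; exists (i c); split; [exists c; auto | apply (morphD hm hc)].
Qed.

Lemma morph_factor_strict_inj (D : Type) (oD : hmod_ops H D) (g : D -> B) :
  is_morph oD oB g -> (forall d, exists a, g d = i a) ->
  exists u, is_morph oD oA u /\ forall d, i (u d) = g d.
Proof.
intros hg hrange.
exists (fun d => proj1_sig (constructive_indefinite_description _ (hrange d))).
set (u := fun d => proj1_sig (constructive_indefinite_description _ (hrange d))).
assert (hu : forall d, g d = i (u d)).
{ intro d; unfold u; destruct (constructive_indefinite_description _ _) as [a ha]; exact ha. }
split; [split; [| split] | intro d; symmetry; apply hu].
- apply hinj; rewrite <- hu, (morph0 hm); apply (morph0 hg).
- intros r d; apply hinj; rewrite <- hu, (morphZ r _ hm), <- hu; apply (morphZ r d hg).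
- intros a b c hd; apply (morphD hg) in hd; rewrite !hu in hd.
  destruct (strict_morphD hi hd) as [c' [hc' E]]; apply hinj in E; rewrite E; exact hc'.
Qed.

Variables (C : A -> Prop) (hC : is_submodule oA C).
Notation CB := (image_pred i C).
Let hCB := image_submodule hC.

Definition quot_map (X : quot oA C) : quot oB CB := qproj oB CB (i (qrepr X)).

Lemma quot_map_qproj x : quot_map (qproj oA C x) = qproj oB CB (i x).
Proof. apply qproj_eq, qequiv_image, qrepr_qproj; exact hC. Qed.

Lemma qproj_image_eq x y : qproj oB CB (i x) = qproj oB CB (i y) <-> qproj oA C x = qproj oA C y.
Proof. rewrite !qproj_eq; apply qequiv_image, hC. Qed.

Lemma quot_map_morph : is_morph (quot_ops oA C) (quot_ops oB CB) quot_map.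
Proof.
split; [| split].
- simpl; rewrite quot_map_qproj, (morph0 hm); reflexivity.
- intros r X; destruct (qproj_surj X) as [x ->].
  rewrite (quot_act_qproj hA hC), !quot_map_qproj, (quot_act_qproj hB hCB), (morphZ r x hm).
  reflexivity.
- intros X Y Z; destruct (qproj_surj X) as [x ->]; destruct (qproj_surj Y) as [y ->].
  rewrite quot_addE; intros [x' [y' [z [Ex [Ey [hz ->]]]]]].
  rewrite !quot_map_qproj, quot_addE.
  exists (i x'), (i y'), (i z); rewrite !(qequiv_image hC).
  split; [exact Ex | split; [exact Ey | split; [apply (morphD hm hz) | reflexivity]]].
Qed.

Lemma quot_map_strict : is_strict_morph (quot_ops oA C) (quot_ops oB CB) quot_map.
Proof.
split; [exact quot_map_morph |].
intros X Y W; split; [| intros [Z [hZ ->]]; apply (morphD quot_map_morph hZ)].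
destruct (qproj_surj X) as [x ->]; destruct (qproj_surj Y) as [y ->].
rewrite !quot_map_qproj, quot_addE; intros [b1 [b2 [w [E1 [E2 [hw ->]]]]]].
destruct (qequiv_image_range hC E1) as [a1 ->]; destruct (qequiv_image_range hC E2) as [a2 ->].
rewrite (qequiv_image hC) in E1, E2.
destruct (strict_morphD hi hw) as [a3 [h3 ->]].
exists (qproj oA C a3); split; [exists a1, a2, a3; auto | symmetry; apply quot_map_qproj].
Qed.

Lemma quot_map_inj : injective quot_map.
Proof.
intros X Y; destruct (qproj_surj X) as [x ->]; destruct (qproj_surj Y) as [y ->].
rewrite !quot_map_qproj; apply qproj_image_eq.
Qed.

Lemma quot_square_pullback :
  is_pullback oA oB (quot_ops oA C) (quot_ops oB CB) i (qproj oA C) (qproj oB CB) quot_map.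
Proof.
split; [intro a; symmetry; apply quot_map_qproj |].
intros D oD _ g h hg hh comm.
assert (comm' : forall d, qproj oB CB (g d) = qproj oB CB (i (qrepr (h d)))).
{ intro d; rewrite comm, <- quot_map_qproj, qproj_qrepr; reflexivity. }
assert (hrange : forall d, exists a, g d = i a).
{ intro d; exact (qequiv_image_range hC (proj1 (qproj_eq _ _ _ _) (comm' d))). }
destruct (morph_factor_strict_inj hg hrange) as [u [hu hiu]].
exists u; split; [split; [exact hu | split; [exact hiu |]] |].
- intro d; rewrite <- (qproj_qrepr (h d)); apply qproj_image_eq.
  rewrite hiu; apply comm'.
- intros u' _ hiu' _ d; apply hinj; rewrite hiu, hiu'; reflexivity.
Qed.

Lemma quot_square_pushout :
  is_pushout oA oB (quot_ops oA C) (quot_ops oB CB) i (qproj oA C) (qproj oB CB) quot_map.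
Proof.
split; [intro a; symmetry; apply quot_map_qproj |].
intros D oD hD g h hg hh comm.
assert (hgC : forall c, CB c -> g c = m_zero oD).
{ intros c [c0 [Cc0 ->]]; rewrite comm, (qproj_sub0 hA hC Cc0); apply (morph0 hh). }
exists (quot_lift (o:=oB) (C:=CB) g).
split; [split; [exact (quot_lift_morph hB hCB (proj1 hD) hg hgC) | split] |].
- apply (quot_lift_qproj hB hCB (proj1 hD) hg hgC).
- apply quot_fun_ext; intro a.
  rewrite quot_map_qproj, (quot_lift_qproj hB hCB (proj1 hD) hg hgC); apply comm.
- intros u' _ hu' _; apply quot_fun_ext; intro b.
  rewrite hu', (quot_lift_qproj hB hCB (proj1 hD) hg hgC); reflexivity.
Qed.

End StrictMorph.

Theorem mainTheorem20 (H : hyperring) (A B : Type)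
  (oA : hmod_ops H A) (oB : hmod_ops H B)
  (hA : is_hmodule oA) (hB : is_hmodule oB)
  (i : A -> B) (hi : is_strict_morph oA oB i) (hinj : injective i)
  (C : A -> Prop) (hC : is_submodule oA C) :
  let CB := image_pred i C in
  let j := qproj oA C in
  let j' := qproj oB CB in
  let i' := fun X : quot oA C => qproj oB CB (i (qrepr X)) in
  (* well-definedness of [x] |-> [i x] *)
  (forall x y : A, j x = j y -> j' (i x) = j' (i y)) /\
  (forall x : A, i' (j x) = j' (i x)) /\
  is_strict_morph (quot_ops oA C) (quot_ops oB CB) i' /\
  injective i' /\
  is_pullback oA oB (quot_ops oA C) (quot_ops oB CB) i j j' i' /\
  is_pushout oA oB (quot_ops oA C) (quot_ops oB CB) i j j' i'.
Proof.
intros CB j j' i'.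
split; [intros x y; apply (qproj_image_eq hA hB hi hinj hC) |].
split; [exact (quot_map_qproj hA hB hi hinj hC) |].
split; [exact (quot_map_strict hA hB hi hinj hC) |].
split; [exact (quot_map_inj hA hB hi hinj hC) |].
split; [exact (quot_square_pullback hA hB hi hinj hC) |].
exact (quot_square_pushout hA hB hi hinj hC).
Qed.
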